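(* Let $d\geq 2$ and $m\geq 1$ be integers, let $p=\frac{d+1}{d+m}$, and let $$Z=p\,\frac{I_d}{d}+(1-p)\,\frac{J_d}{d},$$ where $I_d$ is the $d\times d$ identity matrix and $J_d$ is the $d\times d$ matrix all of whose entries equal $1$. Then there exists an extreme point $\Phi$ of the convex set $\mathcal{CP}\!\left(M_d,M_{d+m};\,Z,\,\frac{I_{d+m}}{d+m}\right)$ whose Choi rank equals $d+m$.
   Context: $M_n$ denotes the algebra of complex $n\times n$ matrices. For positive semidefinite $A\in M_{d_1}$ and $B\in M_{d_2}$, $\mathcal{CP}(M_{d_1},M_{d_2};A,B)$ denotes the convex set of all completely positive linear maps $\Phi:M_{d_1}\to M_{d_2}$ such that $\Phi(I_{d_1})=B$ and $\Phi^*(I_{d_2})=A$, where $\Phi^*$ is the adjoint of $\Phi$ with respect to the Hilbert–Schmidt inner product; equivalently, $\Phi(X)=\sum_i K_iXK_i^\dagger$ with $d_2\times d_1$ matrices $K_i$ satisfying $\sum_i K_i^\dagger K_i=A$ and $\sum_i K_iK_i^\dagger=B$. An extreme point of a convex set $\mathcal{K}$ is an element $\Phi\in\mathcal{K}$ such that $\Phi=t\Phi_1+(1-t)\Phi_2$ with $\Phi_1,\Phi_2\in\mathcal{K}$, $t\in(0,1)$ implies $\Phi_1=\Phi_2=\Phi$. The Choi rank of $\Phi:M_{d_1}\to M_{d_2}$ is the rank of its Choi matrix $\sum_{r,s=1}^{d_1}E_{rs}\otimes\Phi(E_{rs})$ (equivalently, the minimal number of Kraus operators of $\Phi$), where $E_{rs}$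 are the matrix units. *)

From HB Require Import structures.
From mathcomp Require Import all_boot all_order all_algebra.
From mathcomp Require Import reals.
From mathcomp Require Import complex mxtens.
Set Implicit Arguments. Unset Strict Implicit. Unset Printing Implicit Defensive.
Import Order.TTheory GRing.Theory Num.Theory.
Local Open Scope ring_scope.

Definition adjmx (R : realType) (m n : nat) (K : 'M[R[i]]_(m, n)) : 'M[R[i]]_(n, m) :=
  (map_mx Num.conj K)^T.

Definition CPset (R : realType) (d1 d2 : nat) (A : 'M[R[i]]_d1) (B : 'M[R[i]]_d2)
  (Phi : 'M[R[i]]_d1 -> 'M[R[i]]_d2) : Prop :=
  exists Ks : seq 'M[R[i]]_(d2, d1),
    (forall X, Phi X = \sum_(K <- Ks) (K *m X *m adjmx K)) /\
    \sum_(K <- Ks) (adjmx K *m K) = A /\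
    \sum_(K <- Ks) (K *m adjmx K) = B.

Definition extreme_point (R : realType) (d1 d2 : nat)
  (S : ('M[R[i]]_d1 -> 'M[R[i]]_d2) -> Prop) (Phi : 'M[R[i]]_d1 -> 'M[R[i]]_d2) : Prop :=
  S Phi /\
  forall (Phi1 Phi2 : 'M[R[i]]_d1 -> 'M[R[i]]_d2) (t : R),
    S Phi1 -> S Phi2 -> 0 < t -> t < 1 ->
    Phi = (fun X => (t%:C)%C *: Phi1 X + ((1 - t)%:C)%C *: Phi2 X) ->
    Phi1 = Phi /\ Phi2 = Phi.

Definition choi_matrix (R : realType) (d1 d2 : nat) (Phi : 'M[R[i]]_d1 -> 'M[R[i]]_d2)
  : 'M[R[i]]_(d1 * d2) :=
  \sum_(r < d1) \sum_(s < d1) (delta_mx r s *t Phi (delta_mx r s)).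

Definition choi_rank (R : realType) (d1 d2 : nat) (Phi : 'M[R[i]]_d1 -> 'M[R[i]]_d2) : nat :=
  \rank (choi_matrix Phi).

(** The channel [X |-> diag (V X V^+)], with one rank-one Kraus operator
    [E_aa V] for each row of [V], is an extreme point of its set
    [CP(V^+ V, c I)] as soon as the Gram matrix [V V^+] has constant diagonal
    [c] and no zero entry.  Indeed, if it is [t Phi1 + (1 - t) Phi2], then
    evaluating at [w w^+] shows that every Kraus operator [K] of [Phi1] kills
    [w] in row [a] whenever [V] does, so [K = diag(l) V]; hence
    [Phi1(X)_ab = C_ab (V X V^+)_ab] and [Phi1(I) = c I] forces [C_ab = delta_ab]
    because [(V V^+)_ab <> 0].  The Kraus operators [E_aa V] are pairwise
    orthogonal of squared norm [c] for the Hilbert-Schmidt product, so the Choi rank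
    is the number of rows.  For [V = [y J + t I; z J]] with
    [z^2 = 1/(d(d+m))], [t^2 = (d+1)/(d(d+m))] and [y = (z - t)/d], one gets
    [V^+ V = Z] and [V V^+] has diagonal [1/(d+m)] and entries
    [-1/(d(d+m))] or [1/(d(d+m))] off it. *)

From HB Require Import structures.
From mathcomp Require Import all_boot all_order all_algebra.
From mathcomp Require Import reals.
From mathcomp Require Import complex mxtens.
From mathcomp Require Import ring.
From Stdlib Require Import FunctionalExtensionality.
Import Order.TTheory GRing.Theory Num.Theory.
Local Open Scope ring_scope.
Set Implicit Arguments. Unset Strict Implicit. Unset Printing Implicit Defensive.

Lemma mul_const_mx (R : pzSemiRingType) p q r (a b : R) :
  (const_mx a : 'M[R]_(p, q)) *m (const_mx b : 'M[R]_(q, r)) = const_mx (a * b *+ q).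
Proof.
apply/matrixP=> i j; rewrite !mxE -[q in RHS]card_ord -sumr_const.
by apply: eq_bigr => k _; rewrite !mxE.
Qed.

Section DeltaMx.
Variable R : pzRingType.

Lemma mul_mx_deltaE m n p (A : 'M[R]_(m, n)) r (s : 'I_p) i j :
  (A *m delta_mx r s) i j = A i r * (j == s)%:R.
Proof.
rewrite mxE (bigD1 r) //= big1 ?addr0 => [|k /negPf nkr]; first by rewrite mxE eqxx.
by rewrite mxE nkr mulr0.
Qed.

Lemma mul_delta_mxE m n p (r : 'I_m) s (A : 'M[R]_(n, p)) i j :
  (delta_mx r s *m A) i j = (i == r)%:R * A s j.
Proof.
rewrite mxE (bigD1 s) //= big1 ?addr0 => [|k /negPf nks]; first by rewrite mxE eqxx andbT.
by rewrite mxE nks andbF mul0r.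
Qed.

Lemma mul_mx_delta_mulE m n p q (A : 'M[R]_(m, n)) r s (B : 'M[R]_(p, q)) i j :
  (A *m delta_mx r s *m B) i j = A i r * B s j.
Proof.
rewrite mxE (bigD1 s) //= big1 ?addr0 => [|k /negPf nks].
  by rewrite mul_mx_deltaE eqxx mulr1.
by rewrite mul_mx_deltaE nks mulr0 mul0r.
Qed.

Lemma delta_mx_conj n (A : 'M[R]_n) a :
  delta_mx a a *m A *m delta_mx a a = A a a *: delta_mx a a.
Proof.
apply/matrixP=> i j; rewrite mul_mx_deltaE mul_delta_mxE !mxE.
by case: (i == a) (j == a) => [] []; rewrite /= ?mul1r ?mulr1 ?mul0r ?mulr0.
Qed.

Lemma mxtrace_mul_delta n (A : 'M[R]_n) i j : \tr (A *m delta_mx i j) = A j i.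
Proof.
rewrite /mxtrace (bigD1 j) //= big1 ?addr0 => [|k /negPf nkj].
  by rewrite mul_mx_deltaE eqxx mulr1.
by rewrite mul_mx_deltaE nkj mulr0.
Qed.

End DeltaMx.

Section Kraus.
Variable R : realType.
Local Notation C := R[i].

Lemma adjmxE m n (A : 'M[C]_(m, n)) i j : adjmx A i j = (A j i)^*.
Proof. by rewrite !mxE. Qed.

Lemma adjmxM m n p (A : 'M[C]_(m, n)) (B : 'M[C]_(n, p)) :
  adjmx (A *m B) = adjmx B *m adjmx A.
Proof. by rewrite /adjmx map_mxM trmx_mul. Qed.

Lemma adjmx_delta m n (i : 'I_m) (j : 'I_n) :
  adjmx (delta_mx i j : 'M[C]_(m, n)) = delta_mx j i.
Proof. by rewrite /adjmx map_delta_mx trmx_delta. Qed.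

Lemma adjmx_diag n (l : 'rV[C]_n) : adjmx (diag_mx l) = diag_mx (map_mx Num.conj l).
Proof. by rewrite /adjmx map_diag_mx tr_diag_mx. Qed.

Lemma adjmx_real m n (A : 'M[R]_(m, n)) :
  adjmx (map_mx (real_complex R) A) = map_mx (real_complex R) A^T.
Proof. by apply/matrixP=> i j; rewrite !mxE; apply/CrealP; rewrite complex_real. Qed.

Lemma mxrank_mulmx_adj q n (P : 'M[C]_(q, n)) (c : C) :
  c != 0 -> adjmx P *m P = c *: 1%:M -> \rank (P *m adjmx P) = n.
Proof.
move=> c_neq0 PP; apply/eqP; rewrite eqn_leq.
rewrite (leq_trans (mxrankM_maxl _ _)) ?rank_leq_col //=.
apply: (@mulmx1_min_rank _ n _ _ _ (adjmx P) (c^-2 *: P)).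
rewrite -scalemxAr !mulmxA -(mulmxA (adjmx P *m P)) PP -scalemxAl -scalemxAr.
by rewrite mul1mx !scalerA -mulrA -expr2 mulVf ?expf_neq0 ?scale1r.
Qed.

Definition kraus_map n d (Ks : seq 'M[C]_(n, d)) (X : 'M[C]_d) : 'M[C]_n :=
  \sum_(K <- Ks) K *m X *m adjmx K.

Lemma kraus_map1 n d (Ks : seq 'M[C]_(n, d)) :
  kraus_map Ks 1%:M = \sum_(K <- Ks) K *m adjmx K.
Proof. by apply: eq_bigr => K _; rewrite mulmx1. Qed.

Lemma kraus_map_rank1_diag n d (Ks : seq 'M[C]_(n, d)) (w : 'cV[C]_d) a :
  kraus_map Ks (w *m adjmx w) a a = \sum_(K <- Ks) `|(K *m w) a 0| ^+ 2.
Proof.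
rewrite summxE; apply: eq_bigr => K _.
by rewrite mulmxA -mulmxA -adjmxM mxE big_ord1 adjmxE normCK.
Qed.

Lemma choi_matrixE n d (Phi : 'M[C]_d -> 'M[C]_n) r a s b :
  choi_matrix Phi (mxtens_index (r, a)) (mxtens_index (s, b))
  = Phi (delta_mx r s) a b.
Proof.
rewrite /choi_matrix summxE (bigD1 r) //= [X in _ + X]big1 ?addr0 => [|r' /negPf nr].
  rewrite summxE (bigD1 s) //= [X in _ + X]big1 ?addr0 => [|s' /negPf ns].
    by rewrite tensmxE mxE !eqxx mul1r.
  by rewrite tensmxE mxE eq_sym ns andbF mul0r.
rewrite summxE big1 // => s' _.
by rewrite tensmxE mxE eq_sym nr mul0r.
Qed.

(* Column [k] is the vectorization of [K k], indexed like the Choi matrix. *)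
Definition kraus_vec n d p (K : 'I_p -> 'M[C]_(n, d)) : 'M[C]_(d * n, p) :=
  \matrix_(i, k) K k (mxtens_unindex i).2 (mxtens_unindex i).1.

Lemma kraus_vecE n d p (K : 'I_p -> 'M[C]_(n, d)) r a k :
  kraus_vec K (mxtens_index (r, a)) k = K k a r.
Proof. by rewrite mxE mxtens_indexK. Qed.

Lemma choi_matrix_kraus n d p (K : 'I_p -> 'M[C]_(n, d)) :
  choi_matrix (fun X => \sum_k K k *m X *m adjmx (K k))
  = kraus_vec K *m adjmx (kraus_vec K).
Proof.
apply/matrixP=> i j.
case: (mxtens_indexP i) => r a; case: (mxtens_indexP j) => s b.
rewrite choi_matrixE /= summxE mxE; apply: eq_bigr => k _.
by rewrite mul_mx_delta_mulE !adjmxE !kraus_vecE.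
Qed.

Lemma kraus_vec_gram n d p (K : 'I_p -> 'M[C]_(n, d)) :
  adjmx (kraus_vec K) *m kraus_vec K = \matrix_(k, l) \tr (adjmx (K k) *m K l).
Proof.
apply/matrixP=> k l; rewrite !mxE (reindex (@mxtens_index d n)) /=; last first.
  exact: onW_bij (Bijective (@mxtens_indexK d n) (@mxtens_unindexK d n)).
rewrite /mxtrace; under [RHS]eq_bigr => r _ do rewrite mxE.
rewrite pair_big; apply: eq_bigr => -[r a] _.
by rewrite !adjmxE !kraus_vecE.
Qed.

Lemma proportional_of_kernel_sub d (u v : 'rV[C]_d) (c : C) :
  c != 0 -> v *m adjmx v = c%:M ->
  (forall w : 'cV[C]_d, (v *m w) 0 0 = 0 -> (u *m w) 0 0 = 0) ->
  u = ((u *m adjmx v) 0 0 / c) *: v.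
Proof.
move=> c_neq0 vv uv.
(* [W] is the orthogonal projector onto the kernel of [v]. *)
pose W : 'M[C]_d := 1%:M - c^-1 *: (adjmx v *m v).
have colW (x : 'rV[C]_d) k : (x *m W) 0 k = (x *m col k W) 0 0.
  by rewrite colE mulmxA -colE /col mxE.
have vW : v *m W = 0.
  rewrite mulmxBr mulmx1 -scalemxAr mulmxA vv mul_scalar_mx scalerA.
  by rewrite mulVf // scale1r subrr.
have uW : u *m W = 0.
  apply/rowP=> k; rewrite colW [RHS]mxE; apply: uv.
  by rewrite -colW vW mxE.
move/eqP: uW; rewrite mulmxBr mulmx1 subr_eq0 => /eqP {1}->.
by rewrite -scalemxAr mulmxA {1}[u *m adjmx v]mx11_scalar mul_scalar_mx scalerA mulrC.
Qed.

End Kraus.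

Section Pinching.
Variables (R : realType) (n d : nat) (V : 'M[R[i]]_(n, d)) (c : R[i]).
Local Notation C := R[i].
Hypothesis c_neq0 : c != 0.
Hypothesis gram_diag : forall a, (V *m adjmx V) a a = c.
Hypothesis gram_offdiag : forall a b, a != b -> (V *m adjmx V) a b != 0.

Definition pinch_map (X : 'M[C]_d) : 'M[C]_n :=
  diag_mx (\row_a (V *m X *m adjmx V) a a).

Lemma pinch_map_entry X a b : pinch_map X a b = (V *m X *m adjmx V) a a *+ (a == b).
Proof. by rewrite [LHS]mxE mxE. Qed.

Definition pinch_kraus (a : 'I_n) : 'M[C]_(n, d) := delta_mx a a *m V.

Lemma pinch_mapE X : pinch_map X = \sum_a pinch_kraus a *m X *m adjmx (pinch_kraus a).
Proof.
rewrite /pinch_map diag_mx_sum_delta; apply: eq_bigr => a _.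
rewrite /pinch_kraus adjmxM adjmx_delta !mulmxA -2!(mulmxA (delta_mx a a)).
by rewrite delta_mx_conj mxE.
Qed.

Lemma pinch_map_CP : CPset (adjmx V *m V) (c *: 1%:M) pinch_map.
Proof.
exists (map pinch_kraus (index_enum 'I_n)); split; last split; rewrite ?big_map.
- by move=> X; rewrite big_map pinch_mapE.
- under eq_bigr => a _
    do rewrite adjmxM adjmx_delta mulmxA -(mulmxA (adjmx V)) mul_delta_mx.
  by rewrite -mulmx_suml -mulmx_sumr -mx1_sum_delta mulmx1.
- transitivity (pinch_map 1%:M).
    by rewrite pinch_mapE; apply: eq_bigr => a _; rewrite mulmx1.
  rewrite /pinch_map mulmx1 scalemx1 -diag_const_mx.
  by congr diag_mx; apply/rowP=> a; rewrite [LHS]mxE gram_diag mxE.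
Qed.

Definition kernel_dominated (K : 'M[C]_(n, d)) :=
  forall (w : 'cV[C]_d) a, (V *m w) a 0 = 0 -> (K *m w) a 0 = 0.

Lemma pinch_map_rank1_diag (w : 'cV[C]_d) a :
  pinch_map (w *m adjmx w) a a = `|(V *m w) a 0| ^+ 2.
Proof.
have := kraus_map_rank1_diag [:: V] w a; rewrite /kraus_map !big_seq1 => <-.
by rewrite pinch_map_entry eqxx mulr1n.
Qed.

Lemma kernel_dominated_of_sum Ks1 Ks2 (s1 s2 : R) :
  0 < s1 -> 0 <= s2 ->
  (forall X,
     pinch_map X = (s1%:C)%C *: kraus_map Ks1 X + (s2%:C)%C *: kraus_map Ks2 X) ->
  forall K, K \in Ks1 -> kernel_dominated K.
Proof.
move=> s1_gt0 s2_ge0 decomp K KKs1 w a Vw.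
have sq_ge0 (Ks : seq 'M[C]_(n, d)) : 0 <= \sum_(K <- Ks) `|(K *m w) a 0| ^+ 2.
  by apply: sumr_ge0 => K' _; rewrite exprn_ge0.
have entryE (x y : C) (A B : 'M[C]_n) : (x *: A + y *: B) a a = x * A a a + y * B a a.
  by rewrite !mxE.
have := congr1 (fun M : 'M[C]_n => M a a) (decomp (w *m adjmx w)).
rewrite /= pinch_map_rank1_diag Vw normr0 expr0n entryE !kraus_map_rank1_diag.
move/esym/eqP; rewrite paddr_eq0 ?mulr_ge0 ?ler0c ?sq_ge0 ?(ltW s1_gt0) // => /andP[+ _].
rewrite mulf_eq0 fmorph_eq0 (gt_eqF s1_gt0) /= psumr_eq0 => [/allP/(_ K KKs1)|K' _].
  by rewrite /= expf_eq0 /= normr_eq0 => /eqP.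
by rewrite exprn_ge0.
Qed.

Lemma kernel_dominated_diag_mul K :
  kernel_dominated K -> exists l : 'rV[C]_n, K = diag_mx l *m V.
Proof.
move=> domK; exists (\row_a ((row a K *m adjmx (row a V)) 0 0 / c)).
apply/row_matrixP=> a; rewrite row_mul row_diag_mx -scalemxAl -rowE mxE.
apply: proportional_of_kernel_sub c_neq0 _ _.
  rewrite [LHS]mx11_scalar -(gram_diag a) !mxE.
  by congr (_%:M); apply: eq_bigr => j _; rewrite !mxE.
have rowE00 (M : 'cV[C]_n) : row a M 0 0 = M a 0 by rewrite /row mxE.
by move=> w; rewrite -!row_mul !rowE00; exact: domK.
Qed.

Lemma diag_mul_kraus_entry (l : 'rV[C]_n) X a b :
  (diag_mx l *m V *m X *m adjmx (diag_mx l *m V)) a b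
  = l 0 a * (l 0 b)^* * (V *m X *m adjmx V) a b.
Proof.
rewrite adjmxM adjmx_diag !mulmxA -!(mulmxA (diag_mx l)) mul_mx_diag mul_diag_mx.
by rewrite !mxE mulrA mulrAC.
Qed.

Lemma kernel_dominated_entry K X a b : kernel_dominated K ->
  (K *m X *m adjmx K) a b * (V *m adjmx V) a b
  = (K *m adjmx K) a b * (V *m X *m adjmx V) a b.
Proof.
move/kernel_dominated_diag_mul=> [l ->].
have := diag_mul_kraus_entry l 1%:M a b; rewrite !mulmx1 => ->.
by rewrite diag_mul_kraus_entry mulrAC.
Qed.

Lemma kraus_map_eq_pinch Ks :
  (forall K, K \in Ks -> kernel_dominated K) -> kraus_map Ks 1%:M = c *: 1%:M ->
  kraus_map Ks = pinch_map.
Proof.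
move=> domKs unital; apply: functional_extensionality => X; apply/matrixP=> a b.
have scaled : kraus_map Ks X a b * (V *m adjmx V) a b
              = c *+ (a == b) * (V *m X *m adjmx V) a b.
  have -> : c *+ (a == b) = kraus_map Ks 1%:M a b by rewrite unital !mxE mulr_natr.
  rewrite !summxE !mulr_suml !big_seq; apply: eq_bigr => K KKs.
  by rewrite mulmx1; apply: kernel_dominated_entry; exact: domKs.
rewrite pinch_map_entry; move: scaled; have [<-|nab] := eqVneq a b => scaled.
  apply: (mulIf c_neq0); rewrite -[in LHS](gram_diag a) scaled.
  by rewrite mulr1n mulrC.
move: scaled; rewrite !mulr0n mul0r => /eqP.
by rewrite mulf_eq0 (negPf (gram_offdiag nab)) orbF => /eqP.
Qed.

Lemma pinch_map_extreme : extreme_point (CPset (adjmx V *m V) (c *: 1%:M)) pinch_map.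
Proof.
split; first exact: pinch_map_CP.
move=> Phi1 Phi2 t [Ks1 [h1 [_ unital1]]] [Ks2 [h2 [_ unital2]]] t_gt0 t_lt1 decomp.
have decomp1 X :
    pinch_map X = (t%:C)%C *: kraus_map Ks1 X + ((1 - t)%:C)%C *: kraus_map Ks2 X.
  by rewrite decomp h1 h2.
have decomp2 X :
    pinch_map X = ((1 - t)%:C)%C *: kraus_map Ks2 X + (t%:C)%C *: kraus_map Ks1 X.
  by rewrite addrC decomp1.
rewrite (functional_extensionality _ _ h1) (functional_extensionality _ _ h2).
split; apply: kraus_map_eq_pinch; rewrite ?kraus_map1 //.
  by apply: kernel_dominated_of_sum decomp1; rewrite // subr_ge0 ltW.
by apply: kernel_dominated_of_sum decomp2; rewrite ?subr_gt0 // ltW.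
Qed.

Lemma choi_rank_pinch_map : choi_rank pinch_map = n.
Proof.
rewrite /choi_rank (functional_extensionality _ _ pinch_mapE) choi_matrix_kraus.
apply: (mxrank_mulmx_adj c_neq0); rewrite kraus_vec_gram; apply/matrixP=> k l.
rewrite !mxE /pinch_kraus adjmxM adjmx_delta mulmxA -(mulmxA (adjmx V)).
rewrite mul_delta_mx_cond.
have [<-|nkl] := eqVneq k l; last by rewrite !mulr0n mulmx0 mul0mx mxtrace0 mulr0.
by rewrite mxtrace_mulC mulmxA mxtrace_mul_delta gram_diag mulr1.
Qed.

End Pinching.

Section Frame.
Variables (R : comPzRingType) (d m : nat) (y t z : R).

Definition frame_mx : 'M[R]_(d + m, d) := col_mx (const_mx y + t%:M) (const_mx z).

Let top_mxT : (const_mx y + t%:M)^T = const_mx y + t%:M :> 'M[R]_d.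
Proof. by rewrite linearD /= trmx_const tr_scalar_mx. Qed.

Let top_mx_sqr :
  (const_mx y + t%:M) *m (const_mx y + t%:M)
  = const_mx (y ^+ 2 *+ d + 2 * y * t) + (t ^+ 2)%:M :> 'M[R]_d.
Proof.
rewrite mulmxDl !mulmxDr mul_const_mx mul_mx_scalar mul_scalar_mx -scalar_mxM.
by apply/matrixP=> i j; rewrite !mxE; ring.
Qed.

Lemma frame_cogram :
  frame_mx^T *m frame_mx = const_mx (y ^+ 2 *+ d + 2 * y * t + z ^+ 2 *+ m) + (t ^+ 2)%:M.
Proof.
rewrite tr_col_mx mul_row_col top_mxT top_mx_sqr trmx_const mul_const_mx.
by apply/matrixP=> i j; rewrite !mxE; ring.
Qed.

Lemma frame_gram :
  frame_mx *m frame_mx^T =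
  block_mx (const_mx (y ^+ 2 *+ d + 2 * y * t) + (t ^+ 2)%:M) (const_mx (z * (y *+ d + t)))
           (const_mx (z * (y *+ d + t))) (const_mx (z ^+ 2 *+ d)).
Proof.
rewrite tr_col_mx mul_col_row top_mxT top_mx_sqr trmx_const.
rewrite mulmxDl mulmxDr !mul_const_mx mul_mx_scalar mul_scalar_mx.
by congr block_mx; apply/matrixP=> i j; rewrite !mxE; ring.
Qed.

End Frame.

Section ExtremeFrame.
Variables (R : realType) (d m : nat).
Hypothesis d_gt0 : (0 < d)%N.
Let D : R := d%:R.
Let N : R := (d + m)%:R.
Let z : R := Num.sqrt (D * N)^-1.
Let t : R := Num.sqrt ((D + 1) / (D * N)).
Let y : R := (z - t) / D.

Definition extreme_frame : 'M[R]_(d + m, d) := frame_mx d m y t z.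

Let D_neq0 : D != 0. Proof. by rewrite pnatr_eq0 -lt0n. Qed.
Let N_neq0 : N != 0. Proof. by rewrite pnatr_eq0 addn_eq0 negb_and -lt0n d_gt0. Qed.
Let DN_gt0 : 0 < D * N. Proof. by rewrite mulr_gt0 // ltr0n ?addn_gt0 d_gt0. Qed.

Let z_sqr : z ^+ 2 = (D * N)^-1.
Proof. by rewrite sqr_sqrtr // invr_ge0 ltW. Qed.

Let t_sqr : t ^+ 2 = (D + 1) / (D * N).
Proof. by rewrite sqr_sqrtr // divr_ge0 ?addr_ge0 ?ler01 ?ler0n ?ltW. Qed.

Let frame_sum : y *+ d + t = z.
Proof. by rewrite -mulr_natr /y; field. Qed.

Let frame_top_coef : y ^+ 2 *+ d + 2 * y * t = - (D * N)^-1.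
Proof.
have -> : y ^+ 2 *+ d + 2 * y * t = (z ^+ 2 - t ^+ 2) / D by rewrite -mulr_natr /y; field.
by rewrite z_sqr t_sqr; field; rewrite -natrD N_neq0 D_neq0.
Qed.

Lemma extreme_frame_gram :
  extreme_frame *m extreme_frame^T =
  block_mx (const_mx (- (D * N)^-1) + ((D + 1) / (D * N))%:M) (const_mx (D * N)^-1)
           (const_mx (D * N)^-1) (const_mx N^-1).
Proof.
rewrite frame_gram frame_top_coef frame_sum -expr2 z_sqr t_sqr -mulr_natr.
by congr block_mx; congr const_mx; field; rewrite -natrD N_neq0 D_neq0.
Qed.

Lemma extreme_frame_gram_diag a : (extreme_frame *m extreme_frame^T) a a = N^-1.
Proof.
rewrite extreme_frame_gram.
case: (split_ordP a) => [i ->|k ->]; rewrite ?block_mxEul ?block_mxEdr !mxE //.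
by rewrite eqxx mulr1n; field; rewrite -natrD N_neq0 D_neq0.
Qed.

Lemma extreme_frame_gram_neq0 a b : (extreme_frame *m extreme_frame^T) a b != 0.
Proof.
have DN_neq0 : D * N != 0 by rewrite mulf_neq0.
rewrite extreme_frame_gram.
case: (split_ordP a) => [i ->|k ->]; case: (split_ordP b) => [j ->|l ->];
  rewrite ?block_mxEul ?block_mxEur ?block_mxEdl ?block_mxEdr !mxE ?invr_eq0 //.
have [_|_] := eqVneq i j; last by rewrite mulr0n addr0 oppr_eq0 invr_eq0.
rewrite mulr1n (_ : _ + _ = N^-1) ?invr_eq0 //.
by field; rewrite -natrD N_neq0 D_neq0.
Qed.

Lemma extreme_frame_cogram (p := (d.+1)%:R / N) :
  extreme_frame^T *m extreme_frame = (p / D) *: 1%:M + ((1 - p) / D) *: const_mx 1.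
Proof.
rewrite frame_cogram frame_top_coef z_sqr t_sqr; apply/matrixP=> i j; rewrite !mxE.
rewrite /p /N natrD -addn1 natrD -/D.
by case: (i == j); rewrite ?mulr1n ?mulr0n; field; rewrite -natrD N_neq0 D_neq0.
Qed.

End ExtremeFrame.

Theorem mainTheorem1 (R : realType) (d m : nat) :
  (2 <= d)%N -> (1 <= m)%N ->
  let p : R := (d.+1)%:R / (d + m)%:R in
  let Z : 'M[R[i]]_d :=
    ((p / d%:R)%:C)%C *: (1%:M : 'M[R[i]]_d)
    + (((1 - p) / d%:R)%:C)%C *: (const_mx 1 : 'M[R[i]]_d) in
  let B : 'M[R[i]]_(d + m) := ((((d + m)%:R)^-1 : R)%:C)%C *: 1%:M in
  exists Phi : 'M[R[i]]_d -> 'M[R[i]]_(d + m),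
    extreme_point (CPset Z B) Phi
    /\ choi_rank Phi = (d + m)%N.
Proof.
(* The construction works for every [m]; only [0 < d] is used. *)
move=> d_ge2 _ p Z B; have d_gt0 : (0 < d)%N := ltnW d_ge2.
pose V := map_mx (real_complex R) (extreme_frame R d m).
have gramV : V *m adjmx V
    = map_mx (real_complex R) (extreme_frame R d m *m (extreme_frame R d m)^T).
  by rewrite adjmx_real map_mxM.
have c_neq0 : ((((d + m)%:R)^-1 : R)%:C)%C != 0.
  by rewrite fmorph_eq0 invr_eq0 pnatr_eq0 addn_eq0 negb_and -lt0n d_gt0.
have gram_diag a : (V *m adjmx V) a a = ((((d + m)%:R)^-1 : R)%:C)%C.
  by rewrite gramV mxE extreme_frame_gram_diag.
have gram_offdiag a b : a != b -> (V *m adjmx V) a b != 0.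
  by rewrite gramV mxE fmorph_eq0 extreme_frame_gram_neq0.
have -> : Z = adjmx V *m V.
  rewrite adjmx_real -map_mxM extreme_frame_cogram //.
  by rewrite map_mxD !map_mxZ map_mx1 map_const_mx rmorph1.
exists (pinch_map V); split; first exact: pinch_map_extreme.
exact: choi_rank_pinch_map c_neq0 gram_diag.
Qed.
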